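(* Let $n\geq1$ and let $c=(c^S,c^D)$ with $c^D\geq 0$ satisfy $\left(c^S-q_0\right)^++\sqrt{2L^2c^D}<\underline{q}-q_0$. Let $\Gamma_0\subseteq\mathcal{P}^n$ be the fixed-window IPT acceptance region for $\mathbf{H}_0$ with parameters $c$. Then $$\sup_{f_1\in\mathcal{P}_1}P_{f_1,1}\left(\hat f_{X_1^n}\in\Gamma_0\right)\leq (n+1)^m\exp\left(-n\left(\frac{\underline{q}-q_0-\left(c^S-q_0\right)^+}{\sqrt2 L}-\sqrt{c^D}\right)^2\right).$$
   Context: Setup. Let $\mathcal{A}=\{a_1,\dots,a_m\}$ be a finite alphabet and $\mathcal{P}$ the set of probability mass functions (p.m.f.s) on $\mathcal{A}$, with the $\ell_1$ norm $\|f-f'\|_1=\sum_a|f(a)-f'(a)|$. $I(f\|f')=\sum_{a}f(a)\log\frac{f(a)}{f'(a)}$ is the Kullback–Leibler divergence (natural logarithm, $0\log 0=0$). A known pre-change p.m.f. $f_0\in\mathcal{P}$ is fixed. $q:\mathcal{P}\to\mathbb{R}$ is quasiconcave and $L$-Lipschitz with respect to $\ell_1$ (i.e. $|q(f)-q(f')|\leq L\|f-f'\|_1$), with $q_0:=q(f_0)<0<\underline{q}$, and the set of possible post-change p.m.f.s $\mathcal{P}_1$ is a nonempty subset of $\{f: q(f)\geq\underline{q}\}$. Observations $X_1,X_2,\dots$ take values in $\mathcal{A}$; under $P_{f_1,t_1}$ ($f_1\in\mathcal{P}_1$, $t_1\geq 1$) the variables $X_1,\dots,X_{t_1-1}$ are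 i.i.d. $f_0$ and $X_{t_1},X_{t_1+1},\dots$ are i.i.d. $f_1$, independent of the former; $P_\infty$ denotes the law under which all $X_k$ are i.i.d. $f_0$. For $i\leq j$, $\hat f_{X_i^j}(a)=\frac{1}{j-i+1}\#\{i\leq k\leq j: X_k=a\}$ is the empirical p.m.f., and $\mathcal{P}^n$ is the (finite) set of p.m.f.s realizable as empirical p.m.f.s of $n$ letters of $\mathcal{A}$. $(x)^+=\max\{x,0\}$. Fixed-window IPT. Given $c=(c^S,c^D)$ with $c^D\geq0$ and $c^S<\sup_f q(f)$, let $f^*=\arg\min_{f\in\mathcal{P}:\,q(f)\geq c^S}I(f\|f_0)$ be the I-projection of $f_0$ onto the closed convex set $\{q\geq c^S\}$. For sample size $n$, set $\Gamma_1=\{f\in\mathcal{P}^n: q(f)\geq c^S\text{ and } I(f\|f^* )\geq c^D\}$ and $\Gamma_0=\mathcal{P}^n\setminus\Gamma_1$; the test declares $\mathbf{H}_1$ (change/alternative) iff $\hat f_{X_1^n}\in\Gamma_1$. *)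

From Stdlib Require Import Reals Lra List Arith ClassicalEpsilon.
Import ListNotations.
Open Scope R_scope.

(* The alphabet A = {a_1..a_m} is encoded as the naturals 0..m-1.
   A p.m.f. is a function nat -> R; only its values on 0..m-1 matter. *)

Definition sumA (m : nat) (F : nat -> R) : R :=
  fold_right Rplus 0 (map F (seq 0 m)).

Definition is_pmf (m : nat) (f : nat -> R) : Prop :=
  (forall a, (a < m)%nat -> 0 <= f a) /\ sumA m f = 1.

Definition l1 (m : nat) (f g : nat -> R) : R := sumA m (fun a => Rabs (f a - g a)).

Definition abs_cont (m : nat) (f g : nat -> R) : Prop :=
  forall a, (a < m)%nat -> g a = 0 -> f a = 0.

(* finite value of I(f||g) (meaningful when abs_cont m f g), 0 log 0 = 0 *)
Definition KLsum (m : nat) (f g : nat -> R) : R :=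
  sumA m (fun a => if Rlt_dec 0 (f a) then f a * ln (f a / g a) else 0).

(* "I(f||g) >= c" in the extended sense: I = +infinity if f is not
   absolutely continuous w.r.t. g *)
Definition KL_ge (m : nat) (f g : nat -> R) (c : R) : Prop :=
  ~ abs_cont m f g \/ c <= KLsum m f g.

Definition mix (lam : R) (f g : nat -> R) : nat -> R :=
  fun a => lam * f a + (1 - lam) * g a.

Definition quasiconcave (m : nat) (q : (nat -> R) -> R) : Prop :=
  forall f g lam, is_pmf m f -> is_pmf m g -> 0 <= lam <= 1 ->
    Rmin (q f) (q g) <= q (mix lam f g).

Definition lipschitz_l1 (m : nat) (q : (nat -> R) -> R) (L : R) : Prop :=
  forall f g, is_pmf m f -> is_pmf m g -> Rabs (q f - q g) <= L * l1 m f g.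

Definition I_projection (m : nat) (q : (nat -> R) -> R) (cS : R)
    (f0 fstar : nat -> R) : Prop :=
  is_pmf m fstar /\ cS <= q fstar /\ abs_cont m fstar f0 /\
  forall f, is_pmf m f -> cS <= q f -> abs_cont m f f0 ->
    KLsum m fstar f0 <= KLsum m f f0.

Fixpoint words (m n : nat) : list (list nat) :=
  match n with
  | O => [ [] ]
  | S k => flat_map (fun w => map (fun a => a :: w) (seq 0 m)) (words m k)
  end.

Definition word_prob (f : nat -> R) (w : list nat) : R :=
  fold_right Rmult 1 (map f w).

Definition emp (w : list nat) : nat -> R :=
  fun a => INR (count_occ Nat.eq_dec w a) / INR (length w).

Definition ind (P : Prop) : R :=
  if excluded_middle_informative P then 1 else 0.

(* P(empirical pmf of X_1..X_n satisfies E) when X_1,X_2,... i.i.d. f *)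
Definition prob_emp (m n : nat) (f : nat -> R) (E : (nat -> R) -> Prop) : R :=
  fold_right Rplus 0 (map (fun w => word_prob f w * ind (E (emp w))) (words m n)).

Definition Gamma1 (m : nat) (q : (nat -> R) -> R) (cS cD : R) (fstar : nat -> R)
  (h : nat -> R) : Prop := cS <= q h /\ KL_ge m h fstar cD.

Definition Gamma0 (m : nat) (q : (nat -> R) -> R) (cS cD : R) (fstar : nat -> R)
  (h : nat -> R) : Prop := ~ Gamma1 m q cS cD fstar h.

From Pilot Require Import Defs.
From Stdlib Require Import Reals Lra Lia List Classical ClassicalEpsilon.
From Coquelicot Require Import Coquelicot.
Open Scope R_scope.

(* Write Delta = qbar - q f0 - (cS - q f0)^+.  The proof combines three facts.
   1. Pinsker's inequality ||h - g||_1^2 <= 2 I(h||g), proved from a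
      one-variable inequality about t ln t (mean value theorem) summed over
      the alphabet with an AM-GM optimisation.
   2. A Sanov-type bound by the method of types: the probability of a word is
      P_{type}(word) exp(-n I(type||f)), and summing P_{type}(word) over all
      words is at most the number (n+1)^m of count vectors.  Hence if every
      type in a region E is at divergence >= delta from f, then
      P_f(empirical p.m.f. in E) <= (n+1)^m exp(-n delta).
   3. A separation estimate: the I-projection satisfies
      q f* <= q f0 + (cS - q f0)^+ (it is f0 if f0 is feasible, and lies on
      the boundary q = cS otherwise, by convexity of I(.||f0) along segments),
      so every accepted type h has q h <= q f0 + (cS - q f0)^+ + L sqrt(2 cD);
      since q f1 >= qbar, Lipschitz continuity and Pinsker then give
      I(h||f1) >= (Delta / (sqrt 2 L) - sqrt cD)^2.
   The theorem is 2 applied with the divergence gap of 3. *)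

Lemma ln_le_sub1 y : 0 < y -> ln y <= y - 1.
Proof. intros Hy. pose proof (exp_ineq1_le (ln y)) as H. rewrite exp_ln in H; lra. Qed.

Lemma ln_ge_1_sub_inv y : 0 < y -> 1 - / y <= ln y.
Proof.
  intros Hy. pose proof (ln_le_sub1 (/ y) (Rinv_0_lt_compat _ Hy)) as H.
  rewrite ln_Rinv in H by lra. lra.
Qed.

Lemma mvt_at_one (F F' : R -> R) t :
  (forall c, 0 < c -> derivable_pt_lim F c (F' c)) -> F 1 = 0 -> 0 < t -> t <> 1 ->
  exists c, 0 < c /\ 0 < (c - 1) * (t - 1) /\ F t = F' c * (t - 1).
Proof.
  intros HF HF1 Ht Ht1. destruct (Rlt_or_le t 1) as [Hlt|Hge].
  - destruct (MVT_cor2 F F' t 1 Hlt) as [c [Hc [Hc1 Hc2]]].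
    { intros c Hc. apply HF. lra. }
    exists c. repeat split; [lra|nra|lra].
  - destruct (MVT_cor2 F F' 1 t ltac:(lra)) as [c [Hc [Hc1 Hc2]]].
    { intros c Hc. apply HF. lra. }
    exists c. repeat split; [lra|nra|lra].
Qed.

(* chi t = (t+1) ln t - 2(t-1) has the sign of t - 1 (its derivative
   ln t + 1/t - 1 is nonnegative and chi 1 = 0). *)
Lemma chi_sign t : 0 < t -> 0 <= (t - 1) * ((t + 1) * ln t - 2 * (t - 1)).
Proof.
  intros Ht. destruct (Req_dec t 1) as [->|Ht1]; [lra|].
  destruct (mvt_at_one (fun t => (t + 1) * ln t - 2 * (t - 1)) (fun c => ln c + / c - 1) t)
    as [c [Hc [Hct Heq]]]; auto.
  - intros c Hc. apply is_derive_Reals. auto_derive; [lra|field; lra].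
  - rewrite ln_1. ring.
  - cbv beta in Heq. rewrite Heq.
    assert (0 <= ln c + / c - 1) by (pose proof (ln_ge_1_sub_inv c Hc); lra).
    replace ((t - 1) * ((ln c + / c - 1) * (t - 1))) with ((ln c + / c - 1) * (t - 1) ^ 2)
      by ring.
    apply Rmult_le_pos; [lra|apply pow2_ge_0].
Qed.

(* The key one-variable inequality behind Pinsker's inequality:
   3 (t-1)^2 <= (2t+4) (t ln t - t + 1) for t > 0; the difference vanishes
   at 1 and has derivative 4 chi t, which has the sign of t - 1. *)
Lemma pinsker_scalar t : 0 < t -> 3 * (t - 1) ^ 2 <= (2 * t + 4) * (t * ln t - t + 1).
Proof.
  intros Ht. destruct (Req_dec t 1) as [->|Ht1]; [rewrite ln_1; lra|].
  destruct (mvt_at_one (fun t => (2 * t + 4) * (t * ln t - t + 1) - 3 * (t - 1) ^ 2)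
              (fun c => 4 * ((c + 1) * ln c - 2 * (c - 1))) t) as [c [Hc [Hct Heq]]]; auto.
  - intros c Hc. apply is_derive_Reals. auto_derive; [lra|field; lra].
  - rewrite ln_1. ring.
  - cbv beta in Heq. pose proof (chi_sign c Hc) as Hchi.
    set (x := (c + 1) * ln c - 2 * (c - 1)) in *.
    assert (Hsame : 0 <= (c - 1) ^ 2 * (x * (t - 1))).
    { replace ((c - 1) ^ 2 * (x * (t - 1))) with (((c - 1) * x) * ((c - 1) * (t - 1)))
        by ring.
      apply Rmult_le_pos; lra. }
    assert (0 <= x * (t - 1)).
    { assert (Hc1 : c - 1 <> 0) by (intro E; rewrite E in Hct; lra).
      apply (Rmult_le_reg_l ((c - 1) ^ 2)); [apply pow2_gt_0; auto|lra]. }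
    lra.
Qed.

Lemma pinsker_pointwise (x y : R) : 0 <= x -> 0 <= y -> (y = 0 -> x = 0) ->
  0 <= (if Rlt_dec 0 x then x * ln (x / y) else 0) - x + y /\
  (x - y) ^ 2 <= (2 * x / 3 + 4 * y / 3) * ((if Rlt_dec 0 x then x * ln (x / y) else 0) - x + y).
Proof.
  intros Hx Hy Hxy. destruct (Rlt_dec 0 x) as [Hx0|Hx0].
  - assert (Hy0 : 0 < y).
    { destruct Hy as [Hy|Hy]; auto. subst. specialize (Hxy eq_refl). lra. }
    set (t := x / y). assert (Ht : 0 < t) by (apply Rdiv_lt_0_compat; auto).
    assert (Hxt : x = t * y) by (unfold t; field; lra). rewrite Hxt.
    pose proof (pinsker_scalar t Ht).
    assert (Hd : 0 <= t * ln t - t + 1).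
    { pose proof (ln_ge_1_sub_inv t Ht).
      assert (t * (1 - / t) <= t * ln t) by (apply Rmult_le_compat_l; lra).
      replace (t * (1 - / t)) with (t - 1) in H1 by (field; lra). lra. }
    split.
    + replace (t * y * ln t - t * y + y) with (y * (t * ln t - t + 1)) by ring. nra.
    + replace ((2 * (t * y) / 3 + 4 * y / 3) * (t * y * ln t - t * y + y))
        with (y ^ 2 * ((2 * t + 4) * (t * ln t - t + 1)) / 3) by field.
      replace ((t * y - y) ^ 2) with (y ^ 2 * (3 * (t - 1) ^ 2) / 3) by field.
      apply Rmult_le_compat_r; [lra|]. apply Rmult_le_compat_l; [nra|lra].
  - assert (x = 0) by lra. subst. split; [lra|nra].
Qed.

Lemma abs_le_amgm (x w D s : R) : 0 <= w -> 0 <= D -> 0 < s -> x ^ 2 <= w * D ->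
  Rabs x <= s * w / 2 + D / (2 * s).
Proof.
  intros Hw HD Hs Hx.
  assert (0 <= D / (2 * s)) by (apply Rdiv_le_0_compat; lra).
  assert (Hgap : (s * w / 2 + D / (2 * s)) ^ 2 - w * D = (s * w / 2 - D / (2 * s)) ^ 2)
    by (field; lra).
  assert (Hy : 0 <= s * w / 2 + D / (2 * s)) by nra.
  assert (Hsq : x ^ 2 <= (s * w / 2 + D / (2 * s)) ^ 2)
    by (pose proof (pow2_ge_0 (s * w / 2 - D / (2 * s))); lra).
  revert Hsq Hy. generalize (s * w / 2 + D / (2 * s)). intros y Hsq Hy.
  destruct (Rcase_abs x); [rewrite Rabs_left by auto|rewrite Rabs_right by auto]; nra.
Qed.

Definition lsum {A : Type} (l : list A) (F : A -> R) : R := fold_right Rplus 0 (map F l).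
Definition lprod {A : Type} (l : list A) (F : A -> R) : R := fold_right Rmult 1 (map F l).

Lemma sumA_lsum m F : sumA m F = lsum (seq 0 m) F.
Proof. reflexivity. Qed.

Section ListSums.
Context {A : Type}.
Implicit Types (l : list A) (F G : A -> R).

Lemma lsum_cons x l F : lsum (x :: l) F = F x + lsum l F.
Proof. reflexivity. Qed.

Lemma lprod_cons x l F : lprod (x :: l) F = F x * lprod l F.
Proof. reflexivity. Qed.

Lemma lsum_ext l F G : (forall x, In x l -> F x = G x) -> lsum l F = lsum l G.
Proof.
  induction l as [|x l IH]; intros H; [reflexivity|].
  rewrite !lsum_cons, (H x (or_introl eq_refl)), IH; [reflexivity|].
  intros; apply H; right; auto.
Qed.

Lemma lprod_ext l F G : (forall x, In x l -> F x = G x) -> lprod l F = lprod l G.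
Proof.
  induction l as [|x l IH]; intros H; [reflexivity|].
  rewrite !lprod_cons, (H x (or_introl eq_refl)), IH; [reflexivity|].
  intros; apply H; right; auto.
Qed.

Lemma lsum_zero l : lsum l (fun _ => 0) = 0.
Proof. induction l as [|x l IH]; [reflexivity|]. rewrite lsum_cons, IH. ring. Qed.

Lemma lsum_le l F G : (forall x, In x l -> F x <= G x) -> lsum l F <= lsum l G.
Proof.
  induction l as [|x l IH]; intros H; [cbn; lra|]. rewrite !lsum_cons.
  pose proof (H x (or_introl eq_refl)).
  assert (lsum l F <= lsum l G) by (apply IH; intros; apply H; right; auto).
  lra.
Qed.

Lemma lsum_nonneg l F : (forall x, In x l -> 0 <= F x) -> 0 <= lsum l F.
Proof. intros H. rewrite <- (lsum_zero l). apply lsum_le; auto. Qed.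

Lemma lsum_plus l F G : lsum l (fun x => F x + G x) = lsum l F + lsum l G.
Proof. induction l as [|x l IH]; [cbn; lra|]. rewrite !lsum_cons, IH. ring. Qed.

Lemma lsum_scal l c F : lsum l (fun x => c * F x) = c * lsum l F.
Proof. induction l as [|x l IH]; [cbn; lra|]. rewrite !lsum_cons, IH. ring. Qed.

Lemma lsum_minus l F G : lsum l (fun x => F x - G x) = lsum l F - lsum l G.
Proof. induction l as [|x l IH]; [cbn; lra|]. rewrite !lsum_cons, IH. ring. Qed.

Lemma lsum_ge_elem l F x : In x l -> (forall y, In y l -> 0 <= F y) -> F x <= lsum l F.
Proof.
  induction l as [|y l IH]; intros Hx H; [destruct Hx|]. rewrite lsum_cons.
  assert (0 <= lsum l F) by (apply lsum_nonneg; intros; apply H; right; auto).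
  pose proof (H y (or_introl eq_refl)).
  destruct Hx as [<-|Hx]; [lra|].
  assert (F x <= lsum l F) by (apply IH; auto; intros; apply H; right; auto).
  lra.
Qed.

Lemma lsum_app l1 l2 F : lsum (l1 ++ l2) F = lsum l1 F + lsum l2 F.
Proof. induction l1 as [|x l IH]; simpl app; [cbn; lra|]. rewrite !lsum_cons, IH. ring. Qed.

Lemma lsum_const1 l : lsum l (fun _ => 1) = INR (length l).
Proof.
  induction l as [|x l IH]; [reflexivity|].
  rewrite lsum_cons, IH, length_cons, S_INR. ring.
Qed.

Lemma lprod_mult l F G : lprod l (fun x => F x * G x) = lprod l F * lprod l G.
Proof. induction l as [|x l IH]; [cbn; ring|]. rewrite !lprod_cons, IH. ring. Qed.

Lemma lprod_one l : lprod l (fun _ => 1) = 1.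
Proof. induction l as [|x l IH]; [reflexivity|]. rewrite lprod_cons, IH. ring. Qed.

Lemma exp_lsum l F : exp (lsum l F) = lprod l (fun x => exp (F x)).
Proof.
  induction l as [|x l IH]; [apply exp_0|].
  rewrite lsum_cons, lprod_cons, exp_plus, IH. reflexivity.
Qed.

Lemma lprod_zero l F x : In x l -> F x = 0 -> lprod l F = 0.
Proof.
  induction l as [|y l IH]; intros Hx H; [destruct Hx|]. rewrite lprod_cons.
  destruct Hx as [<-|Hx]; [rewrite H|rewrite IH by auto]; ring.
Qed.

End ListSums.

Lemma lsum_map {A B} (l : list A) (g : A -> B) F : lsum (map g l) F = lsum l (fun x => F (g x)).
Proof.
  induction l as [|x l IH]; [reflexivity|].
  simpl map. rewrite !lsum_cons, IH. reflexivity.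
Qed.

Lemma lsum_flat_map {A B} (l : list A) (g : A -> list B) F :
  lsum (flat_map g l) F = lsum l (fun x => lsum (g x) F).
Proof.
  induction l as [|x l IH]; [reflexivity|]. simpl flat_map.
  rewrite lsum_app, lsum_cons, IH. reflexivity.
Qed.

Lemma lsum_exchange {A B} (l1 : list A) (l2 : list B) F :
  lsum l1 (fun x => lsum l2 (F x)) = lsum l2 (fun y => lsum l1 (fun x => F x y)).
Proof.
  induction l1 as [|x l IH].
  - symmetry. apply lsum_zero.
  - rewrite lsum_cons, IH, <- lsum_plus. apply lsum_ext. intros; reflexivity.
Qed.

Lemma lprod_upd (l : list nat) x c F : NoDup l -> In x l ->
  lprod l (fun a => if Nat.eq_dec a x then c * F a else F a) = c * lprod l F.
Proof.
  induction l as [|y l IH]; intros Hnd Hx; [destruct Hx|]. inversion Hnd; subst.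
  rewrite !lprod_cons. destruct (Nat.eq_dec y x) as [->|Hne].
  - rewrite (lprod_ext _ _ F); [ring|].
    intros a Ha. destruct (Nat.eq_dec a x); [subst; contradiction|reflexivity].
  - destruct Hx as [->|Hx]; [contradiction|]. rewrite IH by auto. ring.
Qed.

Lemma lsum_indicator (l : list nat) x : NoDup l -> In x l ->
  lsum l (fun a => if Nat.eq_dec a x then 1 else 0) = 1.
Proof.
  induction l as [|y l IH]; intros Hnd Hx; [destruct Hx|]. inversion Hnd; subst.
  rewrite lsum_cons. destruct (Nat.eq_dec y x) as [->|Hne].
  - rewrite (lsum_ext _ _ (fun _ => 0)), lsum_zero; [ring|].
    intros a Ha. destruct (Nat.eq_dec a x); [subst; contradiction|reflexivity].
  - destruct Hx as [->|Hx]; [contradiction|]. rewrite IH by auto. ring.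
Qed.

Lemma l1_nonneg m f g : 0 <= l1 m f g.
Proof. apply lsum_nonneg. intros; apply Rabs_pos. Qed.

Lemma l1_sym m f g : l1 m f g = l1 m g f.
Proof. apply lsum_ext. intros; apply Rabs_minus_sym. Qed.

(* Summing the pointwise
   bound with weights w = 2h/3 + 4g/3 (total mass 2) and applying AM-GM with a
   free parameter s gives ||h-g||_1 <= s + I/(2s); take s = ||h-g||_1 / 2. *)
Lemma pinsker m h g : is_pmf m h -> is_pmf m g -> abs_cont m h g ->
  (l1 m h g) ^ 2 <= 2 * KLsum m h g.
Proof.
  intros [Hh0 Hh1] [Hg0 Hg1] Hac.
  set (D := fun a => (if Rlt_dec 0 (h a) then h a * ln (h a / g a) else 0) - h a + g a).
  set (w := fun a => 2 * h a / 3 + 4 * g a / 3).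
  assert (Hpt : forall a, In a (seq 0 m) ->
            0 <= D a /\ 0 <= w a /\ (h a - g a) ^ 2 <= w a * D a).
  { intros a Ha. apply in_seq in Ha. destruct Ha as [_ Ha]. simpl in Ha.
    pose proof (Hh0 a Ha). pose proof (Hg0 a Ha).
    destruct (pinsker_pointwise (h a) (g a)) as [C1 C2]; auto.
    unfold D, w. repeat split; auto. lra. }
  assert (HKL : KLsum m h g = lsum (seq 0 m) D).
  { unfold D. rewrite lsum_plus, lsum_minus. rewrite sumA_lsum in Hh1, Hg1.
    unfold KLsum. rewrite sumA_lsum, Hh1, Hg1. ring. }
  assert (HW : lsum (seq 0 m) w = 2).
  { unfold w. rewrite lsum_plus.
    rewrite (lsum_ext _ _ (fun a => (2 / 3) * h a)) by (intros; field).
    rewrite (lsum_ext _ (fun a => 4 * g a / 3) (fun a => (4 / 3) * g a)) by (intros; field).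
    rewrite !lsum_scal. rewrite sumA_lsum in Hh1, Hg1. rewrite Hh1, Hg1. field. }
  assert (HKL0 : 0 <= KLsum m h g) by (rewrite HKL; apply lsum_nonneg; apply Hpt).
  assert (Hamgm : forall s, 0 < s -> l1 m h g <= s + KLsum m h g / (2 * s)).
  { intros s Hs. apply Rle_trans with (lsum (seq 0 m) (fun a => (s / 2) * w a + / (2 * s) * D a)).
    - apply lsum_le. intros a Ha. destruct (Hpt a Ha) as [C1 [C2 C3]].
      replace ((s / 2) * w a + / (2 * s) * D a) with (s * w a / 2 + D a / (2 * s)) by (field; lra).
      apply abs_le_amgm; auto.
    - rewrite lsum_plus, !lsum_scal, HW, HKL. right. field. lra. }
  destruct (l1_nonneg m h g) as [Hp|Hz].
  - specialize (Hamgm (l1 m h g / 2) ltac:(lra)).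
    assert (l1 m h g * l1 m h g <= l1 m h g * (l1 m h g / 2 + KLsum m h g / (2 * (l1 m h g / 2))))
      by (apply Rmult_le_compat_l; lra).
    replace (l1 m h g * (l1 m h g / 2 + KLsum m h g / (2 * (l1 m h g / 2)))) with
      (l1 m h g * l1 m h g / 2 + KLsum m h g) in H by (field; lra).
    simpl. lra.
  - rewrite <- Hz. simpl. lra.
Qed.

Lemma words_in m n w :
  In w (words m n) <-> length w = n /\ (forall x, In x w -> (x < m)%nat).
Proof.
  revert w. induction n as [|n IH]; intros w; simpl words.
  - split.
    + intros [<-|[]]. split; [reflexivity|intros x []].
    + intros [H _]. destruct w; [left; auto|discriminate].
  - rewrite in_flat_map. split.
    + intros [w' [Hw' Hin]]. apply in_map_iff in Hin. destruct Hin as [a [<- Ha]].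
      apply IH in Hw'. destruct Hw' as [Hl Hx]. apply in_seq in Ha.
      split; [simpl; auto|]. intros x [<-|Hx']; [lia|auto].
    + intros [Hl Hx]. destruct w as [|a w']; [discriminate|]. exists w'. split.
      * apply IH. split; [simpl in Hl; lia|]. intros; apply Hx; right; auto.
      * apply in_map_iff. exists a. split; auto.
        apply in_seq. split; [lia|]. simpl. apply Hx; left; auto.
Qed.

Lemma word_prob_cons f x w : word_prob f (x :: w) = f x * word_prob f w.
Proof. reflexivity. Qed.

Lemma word_prob_ext f g w : (forall x, In x w -> f x = g x) -> word_prob f w = word_prob g w.
Proof.
  induction w as [|x w IH]; intros H; [reflexivity|].
  rewrite !word_prob_cons, (H x (or_introl eq_refl)), IH; [reflexivity|].
  intros; apply H; right; auto.
Qed.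

Lemma word_prob_nonneg f w : (forall x, In x w -> 0 <= f x) -> 0 <= word_prob f w.
Proof.
  induction w as [|x w IH]; intros H; [cbn; lra|]. rewrite word_prob_cons.
  apply Rmult_le_pos; [apply H; left; auto|apply IH; intros; apply H; right; auto].
Qed.

Lemma word_prob_total m n h : lsum (words m n) (word_prob h) = (sumA m h) ^ n.
Proof.
  induction n as [|n IH]; simpl words.
  - cbn. ring.
  - rewrite lsum_flat_map, (lsum_ext _ _ (fun w => sumA m h * word_prob h w)).
    + rewrite lsum_scal, IH. simpl. ring.
    + intros w _. rewrite lsum_map, (lsum_ext _ _ (fun a => word_prob h w * h a)).
      * rewrite lsum_scal, sumA_lsum. ring.
      * intros; rewrite word_prob_cons; ring.
Qed.

Lemma words_count m n : lsum (words m n) (fun _ => 1) = INR m ^ n.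
Proof.
  rewrite (lsum_ext _ _ (word_prob (fun _ => 1))).
  - rewrite word_prob_total, sumA_lsum, lsum_const1, length_seq. reflexivity.
  - intros w _. symmetry. induction w as [|x w IH]; [reflexivity|].
    rewrite word_prob_cons, IH. ring.
Qed.

Lemma word_prob_counts m f w : (forall x, In x w -> (x < m)%nat) ->
  word_prob f w = lprod (seq 0 m) (fun a => f a ^ count_occ Nat.eq_dec w a).
Proof.
  induction w as [|x w IH]; intros H.
  - rewrite (lprod_ext _ _ (fun _ => 1)), lprod_one; reflexivity.
  - rewrite word_prob_cons, IH by (intros; apply H; right; auto).
    assert (Hx : In x (seq 0 m)) by (apply in_seq; split; [lia|apply H; left; auto]).
    rewrite <- (lprod_upd (seq 0 m) x (f x)) by (auto using seq_NoDup).
    apply lprod_ext. intros a _. destruct (Nat.eq_dec a x) as [->|Hne].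
    + rewrite count_occ_cons_eq by auto. reflexivity.
    + rewrite count_occ_cons_neq by auto. reflexivity.
Qed.

Lemma counts_total m w : (forall x, In x w -> (x < m)%nat) ->
  lsum (seq 0 m) (fun a => INR (count_occ Nat.eq_dec w a)) = INR (length w).
Proof.
  induction w as [|x w IH]; intros H.
  - apply lsum_zero.
  - assert (Hx : In x (seq 0 m)) by (apply in_seq; split; [lia|apply H; left; auto]).
    rewrite (lsum_ext _ _ (fun a => (if Nat.eq_dec a x then 1 else 0)
                                    + INR (count_occ Nat.eq_dec w a))).
    + rewrite lsum_plus, lsum_indicator, IH by (auto using seq_NoDup; intros; apply H; right; auto).
      rewrite length_cons, S_INR. ring.
    + intros a _. destruct (Nat.eq_dec a x) as [->|Hne].
      * rewrite count_occ_cons_eq, S_INR by auto. ring.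
      * rewrite count_occ_cons_neq by auto. ring.
Qed.

Lemma emp_pmf m n w : (1 <= n)%nat -> In w (words m n) -> is_pmf m (emp w).
Proof.
  intros Hn Hw. apply words_in in Hw. destruct Hw as [Hl Hx].
  assert (HnR : 0 < INR (length w)) by (apply lt_0_INR; lia).
  split.
  - intros a _. apply Rdiv_le_0_compat; [apply pos_INR|lra].
  - rewrite sumA_lsum. unfold emp.
    rewrite (lsum_ext _ _ (fun a => / INR (length w) * INR (count_occ Nat.eq_dec w a)))
      by (intros; unfold Rdiv; ring).
    rewrite lsum_scal, counts_total by auto. field. lra.
Qed.

Lemma word_prob_type m n f w : (1 <= n)%nat -> In w (words m n) ->
  (forall a, (a < m)%nat -> 0 <= f a) -> abs_cont m (emp w) f ->
  word_prob f w = word_prob (emp w) w * exp (- INR n * KLsum m (emp w) f).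
Proof.
  intros Hn Hw Hf Hac. pose proof Hw as Hw'. apply words_in in Hw'. destruct Hw' as [Hl Hx].
  assert (HnR : 0 < INR n) by (apply lt_0_INR; lia).
  rewrite !(word_prob_counts m) by auto.
  unfold KLsum. rewrite sumA_lsum, <- lsum_scal, exp_lsum, <- lprod_mult.
  apply lprod_ext. intros a Ha. apply in_seq in Ha. destruct Ha as [_ Ha]. simpl in Ha.
  set (c := count_occ Nat.eq_dec w a).
  assert (Hc : INR c = INR n * emp w a) by (unfold emp, c; rewrite Hl; field; lra).
  destruct (Rlt_dec 0 (emp w a)) as [Hp|Hp].
  - assert (Hfa : 0 < f a).
    { destruct (Hf a Ha) as [H|H]; auto. symmetry in H. apply Hac in H; auto. lra. }
    replace (- INR n * (emp w a * ln (emp w a / f a))) with (INR c * ln (f a / emp w a)).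
    + change (exp (INR c * ln (f a / emp w a))) with (Rpower (f a / emp w a) (INR c)).
      rewrite Rpower_pow by (apply Rdiv_lt_0_compat; auto).
      rewrite <- Rpow_mult_distr. f_equal. field. lra.
    + rewrite Hc. replace (emp w a / f a) with (/ (f a / emp w a)) by (field; lra).
      rewrite ln_Rinv by (apply Rdiv_lt_0_compat; auto). ring.
  - assert (He : emp w a = 0).
    { assert (0 <= emp w a)
        by (unfold emp; rewrite Hl; apply Rdiv_le_0_compat; [apply pos_INR|lra]).
      lra. }
    rewrite He, Rmult_0_r in Hc. change 0 with (INR 0) in Hc. apply INR_eq in Hc.
    rewrite Hc. simpl. rewrite Rmult_0_r, exp_0. ring.
Qed.

Lemma word_prob_singular m n f w : (1 <= n)%nat -> In w (words m n) ->
  ~ abs_cont m (emp w) f -> word_prob f w = 0.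
Proof.
  intros Hn Hw Hac. pose proof Hw as Hw'. apply words_in in Hw'. destruct Hw' as [Hl Hx].
  assert (exists a, (a < m)%nat /\ f a = 0 /\ emp w a <> 0) as [a [Ha [Hfa He]]].
  { apply NNPP. intros Hne. apply Hac. intros a Ha Hfa. apply NNPP. intros He.
    apply Hne. exists a. auto. }
  rewrite (word_prob_counts m) by auto. apply (lprod_zero _ _ a).
  - apply in_seq. split; [lia|]. simpl; auto.
  - rewrite Hfa. apply pow_i. destruct (count_occ Nat.eq_dec w a) eqn:E; [|lia].
    exfalso. apply He. unfold emp. rewrite E. simpl. unfold Rdiv. ring.
Qed.

Lemma ind_bounds (P : Prop) : 0 <= Defs.ind P <= 1.
Proof. unfold Defs.ind. destruct (excluded_middle_informative P); lra. Qed.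

Definition type_of_counts (n : nat) (kv : list nat) : nat -> R :=
  fun a => INR (nth a kv 0%nat) / INR n.

Lemma emp_has_counts m n w : In w (words m n) ->
  exists kv, In kv (words (S n) m) /\
    forall a, (a < m)%nat -> type_of_counts n kv a = emp w a.
Proof.
  intros Hw. apply words_in in Hw. destruct Hw as [Hl _].
  exists (map (fun a => count_occ Nat.eq_dec w a) (seq 0 m)). split.
  - apply words_in. split; [rewrite length_map, length_seq; reflexivity|].
    intros x Hx. apply in_map_iff in Hx. destruct Hx as [a [<- _]].
    pose proof (count_occ_bound Nat.eq_dec a w). lia.
  - intros a Ha. unfold type_of_counts, emp. rewrite Hl.
    rewrite (nth_indep _ 0%nat (count_occ Nat.eq_dec w 0%nat))
      by (rewrite length_map, length_seq; auto).
    rewrite map_nth, seq_nth by auto. reflexivity.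
Qed.

Lemma pmf_words_mass m n h :
  lsum (words m n) (fun w => word_prob h w * Defs.ind (sumA m h = 1)) <= 1.
Proof.
  rewrite (lsum_ext _ _ (fun w => Defs.ind (sumA m h = 1) * word_prob h w)) by (intros; ring).
  rewrite lsum_scal, word_prob_total. unfold Defs.ind.
  destruct (excluded_middle_informative _) as [E|E]; [rewrite E, pow1|]; lra.
Qed.

(* Counting types: sum over words of the probability of the word under its
   own type is at most the number (n+1)^m of possible count vectors. *)
Lemma types_bound m n : (1 <= n)%nat ->
  lsum (words m n) (fun w => word_prob (emp w) w) <= (INR n + 1) ^ m.
Proof.
  intros Hn. assert (HnR : 0 < INR n) by (apply lt_0_INR; lia).
  set (G := fun kv w => word_prob (type_of_counts n kv) w
                        * Defs.ind (sumA m (type_of_counts n kv) = 1)).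
  assert (HG0 : forall kv w, 0 <= G kv w).
  { intros kv w. apply Rmult_le_pos; [|apply ind_bounds].
    apply word_prob_nonneg. intros; apply Rdiv_le_0_compat; [apply pos_INR|lra]. }
  apply Rle_trans with (lsum (words m n) (fun w => lsum (words (S n) m) (fun kv => G kv w))).
  - apply lsum_le. intros w Hw.
    destruct (emp_has_counts m n w Hw) as [kv [Hkv Hagree]].
    assert (Hcoord : forall x, In x w -> type_of_counts n kv x = emp w x).
    { intros x Hx. apply Hagree. apply words_in in Hw. apply Hw; auto. }
    assert (Hsum : sumA m (type_of_counts n kv) = 1).
    { rewrite sumA_lsum, (lsum_ext _ _ (emp w)), <- sumA_lsum by
        (intros a Ha; apply in_seq in Ha; apply Hagree; lia).
      apply (emp_pmf m n w Hn Hw). }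
    replace (word_prob (emp w) w) with (G kv w).
    + apply (lsum_ge_elem _ (fun kv => G kv w)); auto.
    + unfold G. rewrite (word_prob_ext _ (emp w)) by auto.
      unfold Defs.ind. destruct (excluded_middle_informative _); [ring|contradiction].
  - rewrite lsum_exchange.
    apply Rle_trans with (lsum (words (S n) m) (fun _ => 1)).
    + apply lsum_le. intros kv _. apply pmf_words_mass.
    + rewrite words_count, S_INR. lra.
Qed.

Lemma exp_le_compat x y : x <= y -> exp x <= exp y.
Proof. intros [H|H]; [left; apply exp_increasing; auto|right; rewrite H; reflexivity]. Qed.

Lemma sanov_bound m n f (E : (nat -> R) -> Prop) delta : (1 <= n)%nat ->
  (forall a, (a < m)%nat -> 0 <= f a) ->
  (forall h, is_pmf m h -> abs_cont m h f -> E h -> delta <= KLsum m h f) ->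
  prob_emp m n f E <= (INR n + 1) ^ m * exp (- INR n * delta).
Proof.
  intros Hn Hf Hfar.
  change (prob_emp m n f E) with (lsum (words m n) (fun w => word_prob f w * Defs.ind (E (emp w)))).
  apply Rle_trans with (lsum (words m n) (fun w => exp (- INR n * delta) * word_prob (emp w) w)).
  - apply lsum_le. intros w Hw.
    assert (Hwp : 0 <= word_prob (emp w) w).
    { apply word_prob_nonneg. intros x Hx. apply (emp_pmf m n w Hn Hw).
      apply (proj1 (words_in m n w) Hw); auto. }
    pose proof (exp_pos (- INR n * delta)).
    unfold Defs.ind. destruct (excluded_middle_informative _) as [HE|HE]; [|nra].
    rewrite Rmult_1_r. destruct (classic (abs_cont m (emp w) f)) as [Ha|Ha].
    + rewrite (word_prob_type m n f w Hn Hw Hf Ha), Rmult_comm.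
      apply Rmult_le_compat_r; auto. apply exp_le_compat.
      pose proof (Hfar (emp w) (emp_pmf m n w Hn Hw) Ha HE). pose proof (pos_INR n). nra.
    + rewrite (word_prob_singular m n f w Hn Hw Ha). nra.
  - rewrite lsum_scal, Rmult_comm. apply Rmult_le_compat_r.
    + left; apply exp_pos.
    + apply types_bound; auto.
Qed.

(* Divergence along a segment towards the reference measure:
   I(lam x + (1-lam) g || g) <= lam I(x || g).  Pointwise this is the tangent
   inequality of the convex map y |-> y ln (y/g) at z = lam x + (1-lam) g. *)
Lemma xlogx_tangent (g z y : R) : 0 < g -> 0 < z -> 0 <= y ->
  z * ln (z / g) + (1 + ln (z / g)) * (y - z) <= (if Rlt_dec 0 y then y * ln (y / g) else 0).
Proof.
  intros Hg Hz Hy. destruct (Rlt_dec 0 y) as [Hy0|Hy0].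
  - replace (y / g) with ((y / z) * (z / g)) by (field; lra).
    rewrite ln_mult by (apply Rdiv_lt_0_compat; auto).
    pose proof (ln_ge_1_sub_inv (y / z) ltac:(apply Rdiv_lt_0_compat; auto)).
    assert (y * (1 - / (y / z)) <= y * ln (y / z)) by (apply Rmult_le_compat_l; lra).
    replace (y * (1 - / (y / z))) with (y - z) in H0 by (field; lra). nra.
  - assert (y = 0) by lra. subst. nra.
Qed.

Lemma KL_mix_le m x g lam : is_pmf m x -> is_pmf m g -> abs_cont m x g -> 0 <= lam < 1 ->
  KLsum m (mix lam x g) g <= lam * KLsum m x g.
Proof.
  intros [Hx0 _] [Hg0 _] Hac Hl. unfold KLsum. rewrite !sumA_lsum, <- lsum_scal.
  apply lsum_le. intros a Ha. apply in_seq in Ha. destruct Ha as [_ Ha]. simpl in Ha.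
  pose proof (Hx0 a Ha). pose proof (Hg0 a Ha). unfold mix.
  destruct (Req_dec (g a) 0) as [E|E].
  - rewrite E, (Hac a Ha E).
    destruct (Rlt_dec 0 (lam * 0 + (1 - lam) * 0)); [lra|]. destruct (Rlt_dec 0 0); lra.
  - assert (Hg : 0 < g a) by lra. set (z := lam * x a + (1 - lam) * g a).
    assert (Hz : 0 < z) by (unfold z; nra).
    destruct (Rlt_dec 0 z) as [_|]; [|lra].
    pose proof (xlogx_tangent (g a) z (x a) Hg Hz H) as Tx.
    pose proof (xlogx_tangent (g a) z (g a) Hg Hz ltac:(lra)) as Tg.
    destruct (Rlt_dec 0 (g a)) as [_|]; [|lra].
    replace (g a / g a) with 1 in Tg by (field; lra). rewrite ln_1 in Tg.
    assert (Hz_split : z * ln (z / g a) =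
      lam * (z * ln (z / g a) + (1 + ln (z / g a)) * (x a - z)) +
      (1 - lam) * (z * ln (z / g a) + (1 + ln (z / g a)) * (g a - z))) by (unfold z; ring).
    assert (lam * (z * ln (z / g a) + (1 + ln (z / g a)) * (x a - z)) <=
            lam * (if Rlt_dec 0 (x a) then x a * ln (x a / g a) else 0))
      by (apply Rmult_le_compat_l; lra).
    assert ((1 - lam) * (z * ln (z / g a) + (1 + ln (z / g a)) * (g a - z))
            <= (1 - lam) * (g a * 0))
      by (apply Rmult_le_compat_l; lra).
    lra.
Qed.

Lemma KL_self m g : KLsum m g g = 0.
Proof.
  unfold KLsum. rewrite sumA_lsum, (lsum_ext _ _ (fun _ => 0)) by
    (intros a _; destruct (Rlt_dec 0 (g a)); [rewrite Rdiv_diag, ln_1 by lra; ring|reflexivity]).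
  apply lsum_zero.
Qed.

Lemma mix_pmf m x g lam : is_pmf m x -> is_pmf m g -> 0 <= lam <= 1 -> is_pmf m (mix lam x g).
Proof.
  intros [Hx0 Hx1] [Hg0 Hg1] Hl. split.
  - intros a Ha. unfold mix. pose proof (Hx0 a Ha). pose proof (Hg0 a Ha). nra.
  - unfold mix. rewrite sumA_lsum in *. rewrite lsum_plus, !lsum_scal, Hx1, Hg1. ring.
Qed.

Lemma lipschitz_pos m q L f g : lipschitz_l1 m q L -> is_pmf m f -> is_pmf m g ->
  q g < q f -> 0 < L.
Proof.
  intros Hlip Hf Hg Hlt. pose proof (Hlip f g Hf Hg). pose proof (Rle_abs (q f - q g)).
  pose proof (l1_nonneg m f g). nra.
Qed.

Section IProjection.
Variables (m : nat) (q : (nat -> R) -> R) (L cS : R) (f0 fstar : nat -> R).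
Hypotheses (Hf0 : is_pmf m f0) (Hlip : lipschitz_l1 m q L)
           (Hproj : I_projection m q cS f0 fstar).

(* If f0 itself is feasible, the I-projection is f0 (in l1), so q f* <= q f0. *)
Lemma iproj_q_feasible : cS <= q f0 -> q fstar <= q f0.
Proof.
  intros Hc. destruct Hproj as [Hps [_ [Hacs Hmin]]].
  assert (HK : KLsum m fstar f0 <= 0).
  { rewrite <- (KL_self m f0). apply Hmin; auto. intros a _ E; auto. }
  pose proof (pinsker m fstar f0 Hps Hf0 Hacs). pose proof (l1_nonneg m fstar f0).
  assert (Hl0 : l1 m fstar f0 = 0) by nra.
  pose proof (Hlip fstar f0 Hps Hf0) as Hq. rewrite Hl0, Rmult_0_r in Hq.
  pose proof (Rle_abs (q fstar - q f0)). lra.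
Qed.

(* If f0 is infeasible, the I-projection lies on the boundary q = cS: were
   q f* > cS, moving from f* slightly towards f0 would keep feasibility
   (Lipschitz) and strictly decrease the divergence (segment bound). *)
Lemma iproj_q_boundary : q f0 < cS -> q fstar <= cS.
Proof.
  intros Hc. destruct Hproj as [Hps [Hqs [Hacs Hmin]]].
  apply Rnot_lt_le. intros Hgt.
  pose proof (Hlip fstar f0 Hps Hf0). pose proof (Rle_abs (q fstar - q f0)).
  pose proof (l1_nonneg m fstar f0).
  set (A := L * l1 m fstar f0). set (B := q fstar - cS).
  assert (HA : 0 < A) by (unfold A; lra).
  assert (Hl1 : 0 < l1 m fstar f0).
  { destruct (l1_nonneg m fstar f0) as [Hp|Hz]; auto.
    unfold A in HA. rewrite <- Hz, Rmult_0_r in HA. lra. }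
  assert (HK : 0 < KLsum m fstar f0) by (pose proof (pinsker m fstar f0 Hps Hf0 Hacs); nra).
  assert (HB : 0 < B) by (unfold B; lra).
  set (eps := B / (A + B)).
  assert (He : 0 < eps < 1).
  { unfold eps. split; [apply Rdiv_lt_0_compat; lra|].
    apply (Rmult_lt_reg_r (A + B)); [lra|]. unfold Rdiv. rewrite Rmult_assoc, Rinv_l; lra. }
  assert (HeA : eps * A <= B).
  { unfold eps. replace (B / (A + B) * A) with (B - B * (B / (A + B))) by (field; lra).
    assert (0 <= B * (B / (A + B))) by (apply Rmult_le_pos; [lra|apply Rdiv_le_0_compat; lra]).
    lra. }
  set (g := mix (1 - eps) fstar f0).
  assert (Hg : is_pmf m g) by (apply mix_pmf; auto; lra).
  assert (Hl1g : l1 m g fstar = eps * l1 m fstar f0).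
  { unfold l1. rewrite !sumA_lsum, <- lsum_scal. apply lsum_ext. intros a _.
    unfold g, mix. replace ((1 - eps) * fstar a + (1 - (1 - eps)) * f0 a - fstar a) with
      (eps * (f0 a - fstar a)) by ring.
    rewrite Rabs_mult, Rabs_pos_eq, Rabs_minus_sym by lra. reflexivity. }
  assert (Hqg : cS <= q g).
  { pose proof (Hlip g fstar Hg Hps) as Hq. rewrite Hl1g in Hq.
    pose proof (Rle_abs (q fstar - q g)). rewrite Rabs_minus_sym in Hq.
    assert (L * (eps * l1 m fstar f0) = eps * A) by (unfold A; ring). unfold B in HeA. lra. }
  assert (Hacg : abs_cont m g f0).
  { intros a Ha E. unfold g, mix. rewrite E, (Hacs a Ha E). ring. }
  pose proof (Hmin g Hg Hqg Hacg) as Hopt.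
  pose proof (KL_mix_le m fstar f0 (1 - eps) Hps Hf0 Hacs ltac:(lra)) as Hseg.
  fold g in Hseg. nra.
Qed.

Lemma iproj_q_bound : q fstar <= q f0 + Rmax (cS - q f0) 0.
Proof.
  unfold Rmax. destruct (Rle_dec (cS - q f0) 0) as [Hc|Hc].
  - pose proof iproj_q_feasible. lra.
  - pose proof iproj_q_boundary. lra.
Qed.

End IProjection.

Lemma KL_ge_of_l1 m h g r : is_pmf m h -> is_pmf m g -> abs_cont m h g ->
  0 <= r <= l1 m h g -> r ^ 2 / 2 <= KLsum m h g.
Proof.
  intros Hh Hg Hac Hr. pose proof (pinsker m h g Hh Hg Hac).
  assert (r ^ 2 <= (l1 m h g) ^ 2) by (apply pow_incr; lra). lra.
Qed.

Lemma l1_le_of_KL m h g c : is_pmf m h -> is_pmf m g -> abs_cont m h g ->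
  KLsum m h g <= c -> l1 m h g <= sqrt (2 * c).
Proof.
  intros Hh Hg Hac Hc. pose proof (pinsker m h g Hh Hg Hac).
  rewrite <- (sqrt_pow2 (l1 m h g)) by apply l1_nonneg.
  apply sqrt_le_1_alt. lra.
Qed.

(* Every p.m.f. accepted by the test (in Gamma0) has q-value at most
   q f0 + (cS - q f0)^+ + L sqrt(2 cD): either it fails the threshold cS, or
   it is within divergence cD, hence l1-distance sqrt(2 cD), of f*. *)
Lemma acceptance_q_bound m q L cS cD f0 fstar h :
  is_pmf m f0 -> lipschitz_l1 m q L -> 0 <= L -> I_projection m q cS f0 fstar ->
  is_pmf m h -> Gamma0 m q cS cD fstar h ->
  q h <= q f0 + Rmax (cS - q f0) 0 + L * sqrt (2 * cD).
Proof.
  intros Hf0 Hlip HL Hproj Hh HG.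
  pose proof (iproj_q_bound m q L cS f0 fstar Hf0 Hlip Hproj) as Hqs.
  assert (Hslack : 0 <= L * sqrt (2 * cD)) by (apply Rmult_le_pos; [lra|apply sqrt_pos]).
  destruct (Rle_dec cS (q h)) as [Hc|Hc].
  - destruct Hproj as [Hps _].
    destruct (classic (abs_cont m h fstar)) as [Ha|Ha];
      [|exfalso; apply HG; split; [auto|left; auto]].
    destruct (Rle_dec cD (KLsum m h fstar)) as [Hk|Hk];
      [exfalso; apply HG; split; [auto|right; auto]|].
    pose proof (l1_le_of_KL m h fstar cD Hh Hps Ha ltac:(lra)) as Hl.
    pose proof (Hlip h fstar Hh Hps). pose proof (Rle_abs (q h - q fstar)).
    assert (L * l1 m h fstar <= L * sqrt (2 * cD)) by (apply Rmult_le_compat_l; lra).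
    lra.
  - pose proof (Rmax_l (cS - q f0) 0). lra.
Qed.

(* Every accepted type is far from any post-change p.m.f. f1: a gap
   q f1 - q h >= Delta - L sqrt(2 cD) > 0 forces, via Lipschitz and Pinsker,
   I(h || f1) >= ((Delta - L sqrt(2 cD)) / L)^2 / 2. *)
Lemma acceptance_far_from_alternative m q L qbar cS cD f0 fstar f1 h :
  is_pmf m f0 -> lipschitz_l1 m q L -> 0 < L -> I_projection m q cS f0 fstar ->
  is_pmf m f1 -> qbar <= q f1 ->
  Rmax (cS - q f0) 0 + L * sqrt (2 * cD) < qbar - q f0 ->
  is_pmf m h -> abs_cont m h f1 -> Gamma0 m q cS cD fstar h ->
  ((qbar - q f0 - Rmax (cS - q f0) 0 - L * sqrt (2 * cD)) / L) ^ 2 / 2 <= KLsum m h f1.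
Proof.
  intros Hf0 Hlip HL Hproj Hf1 Hq1 Hgap Hh Hac HG.
  pose proof (acceptance_q_bound m q L cS cD f0 fstar h Hf0 Hlip ltac:(lra) Hproj Hh HG) as Hqh.
  apply KL_ge_of_l1; auto. split.
  - apply Rdiv_le_0_compat; lra.
  - pose proof (Hlip f1 h Hf1 Hh). pose proof (Rle_abs (q f1 - q h)).
    rewrite l1_sym in H. apply (Rmult_le_reg_l L); auto.
    replace (L * ((qbar - q f0 - Rmax (cS - q f0) 0 - L * sqrt (2 * cD)) / L))
      with (qbar - q f0 - Rmax (cS - q f0) 0 - L * sqrt (2 * cD)) by (field; lra).
    lra.
Qed.

Lemma rate_identity L cD D : 0 < L -> 0 <= cD ->
  ((D - L * sqrt (2 * cD)) / L) ^ 2 / 2 = (D / (sqrt 2 * L) - sqrt cD) ^ 2.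
Proof.
  intros HL HcD. assert (Hs2 : 0 < sqrt 2) by (apply sqrt_lt_R0; lra).
  assert (Hsq2 : sqrt 2 * sqrt 2 = 2) by (apply sqrt_sqrt; lra).
  rewrite sqrt_mult by lra.
  replace (((D - L * (sqrt 2 * sqrt cD)) / L) ^ 2 / 2)
    with ((D / (sqrt 2 * L) - sqrt cD) ^ 2 * (sqrt 2 * sqrt 2) / 2) by (field; lra).
  rewrite Hsq2. field. split; lra.
Qed.

Theorem theorem2 (m : nat) (f0 : nat -> R) (q : (nat -> R) -> R) (L qbar : R)
  (P1 : (nat -> R) -> Prop) (cS cD : R) (fstar : nat -> R) (n : nat) :
  (1 <= m)%nat ->
  is_pmf m f0 ->
  quasiconcave m q ->
  lipschitz_l1 m q L ->
  q f0 < 0 -> 0 < qbar ->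
  (exists f, P1 f) ->
  (forall f, P1 f -> is_pmf m f /\ qbar <= q f) ->
  0 <= cD ->
  (exists f, is_pmf m f /\ cS < q f) ->
  I_projection m q cS f0 fstar ->
  (1 <= n)%nat ->
  Rmax (cS - q f0) 0 + sqrt (2 * L ^ 2 * cD) < qbar - q f0 ->
  forall f1, P1 f1 ->
    prob_emp m n f1 (Gamma0 m q cS cD fstar) <=
    (INR n + 1) ^ m *
    exp (- INR n * ((qbar - q f0 - Rmax (cS - q f0) 0) / (sqrt 2 * L) - sqrt cD) ^ 2).
Proof.
  intros _ Hf0 _ Hlip Hq0 Hqbar _ HP1 HcD _ Hproj Hn Hgap f1 Hf1.
  destruct (HP1 f1 Hf1) as [Hpf1 Hq1].
  assert (HL : 0 < L) by (apply (lipschitz_pos m q L f1 f0); auto; lra).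
  assert (Hslack : sqrt (2 * L ^ 2 * cD) = L * sqrt (2 * cD)).
  { replace (2 * L ^ 2 * cD) with (L ^ 2 * (2 * cD)) by ring.
    rewrite sqrt_mult, sqrt_pow2 by (nra || lra). reflexivity. }
  rewrite Hslack in Hgap.
  rewrite <- rate_identity by auto.
  apply sanov_bound; [auto|apply Hpf1|].
  intros h Hh Hac HG.
  apply (acceptance_far_from_alternative m q L qbar cS cD f0 fstar f1 h); auto.
Qed.
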